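(* Let $(\Omega,\rho)$ be a quasi-metric space, $X\subseteq\Omega$ a finite dataset, and let $W=(\Omega,X,\mathcal Q)$ be the quasi-metric similarity workload whose queries are the left balls $B_\varepsilon(\omega)=\{x\in\Omega:\rho(\omega,x)\le\varepsilon\}$, $\omega\in\Omega$, $\varepsilon>0$. Let $T$ be a finite rooted tree and $B_t\subseteq\Omega$, $t\in T$, subsets such that $X\subseteq\bigcup_{t\in L(T)}B_t\subseteq\Omega$ and, for every inner node $t$, $\bigcup_{s\in C_t}(B_s\cap X)\subseteq B_t$. For every node $t$ let $f_t\colon\Omega\to\mathbb R$ be a left 1-Lipschitz function such that $\omega\in B_t$ implies $f_t(\omega)\le 0$. For each inner node $t$ define $F_t(B_\varepsilon(\omega))=\{s\in C_t: f_s(\omega)\le\varepsilon\}$. Then $(T,\{B_t\}_{t\in L(T)},\{F_t\}_{t\in I(T)})$ is a consistent indexing scheme for $W$.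
   Context: A quasi-metric on $\Omega$ is a function $\rho\colon\Omega\times\Omega\to[0,\infty)$ with $\rho(x,y)=0\iff x=y$ and $\rho(x,z)\le\rho(x,y)+\rho(y,z)$, not necessarily symmetric. A function $f\colon\Omega\to\mathbb R$ is left 1-Lipschitz if $f(x)-f(y)\le\rho(x,y)$ for all $x,y\in\Omega$. A workload is a triple $W=(\Omega,X,\mathcal Q)$ where $X\subseteq\Omega$ is finite and $\mathcal Q\subseteq 2^\Omega$. For a rooted finite tree $T$, $L(T)$ is the set of leaves, $I(T)$ the set of inner nodes, $C_t$ the set of children of an inner node $t$. An indexing scheme on $W$ is a triple $(T,\mathcal B,\mathcal F)$ where $T$ is a rooted finite tree with root $\ast$, $\mathcal B=\{B_t\subseteq\Omega: t\in L(T)\}$, and $\mathcal F=\{F_t: t\in I(T)\}$ with $F_t\colon\mathcal Q\to 2^{C_t}$. Given $Q\in\mathcal Q$, the search algorithm sets $A_0=\{\ast\}$, $A_{i+1}=\bigcup_{t\in A_i\cap I(T)}F_t(Q)$, and outputs all $x\in X\cap Q$ with $x\in B_t$ for some leaf $t$ lying in some $A_i$. The scheme is consistent if for every $Q\in\mathcal Q$ the output equals $Q\cap X$. *)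

From Stdlib Require Import Reals List.
Open Scope R_scope.

Definition quasi_metric {Omega : Type} (rho : Omega -> Omega -> R) : Prop :=
  (forall x y, 0 <= rho x y) /\
  (forall x y, rho x y = 0 <-> x = y) /\
  (forall x y z, rho x z <= rho x y + rho y z).

Definition left_1_lipschitz {Omega : Type} (rho : Omega -> Omega -> R)
  (f : Omega -> R) : Prop :=
  forall x y, f x - f y <= rho x y.

Definition finite_set {A : Type} (S : A -> Prop) : Prop :=
  exists l : list A, forall x, S x <-> In x l.
Definition finite_type (A : Type) : Prop :=
  exists l : list A, forall x : A, In x l.

Definition left_ball {Omega : Type} (rho : Omega -> Omega -> R)
  (w : Omega) (eps : R) : Omega -> Prop :=
  fun x => rho w x <= eps.

Fixpoint anc {V : Type} (par : V -> option V) (n : nat) (v : V) : option V :=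
  match n with
  | O => Some v
  | S n' => match par v with None => None | Some p => anc par n' p end
  end.

Definition rooted_tree {V : Type} (root : V) (par : V -> option V) : Prop :=
  finite_type V /\ par root = None /\
  (forall v : V, exists n, anc par n v = Some root).

Definition child {V : Type} (par : V -> option V) (t s : V) : Prop :=
  par s = Some t.
Definition leaf {V : Type} (par : V -> option V) (t : V) : Prop :=
  forall s, ~ child par t s.
Definition inner {V : Type} (par : V -> option V) (t : V) : Prop :=
  exists s, child par t s.

(** Search algorithm of an indexing scheme on a query Q.
    [Fsel t s] means s \in F_t(Q) (for the query Q under consideration). *)
Fixpoint active {V : Type} (root : V) (par : V -> option V)
  (Fsel : V -> V -> Prop) (i : nat) : V -> Prop :=
  match i with
  | O => fun v => v = root
  | S i' => fun s => exists t, active root par Fsel i' t /\ inner par t /\ Fsel t s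
  end.

Definition search_output {Omega V : Type} (root : V) (par : V -> option V)
  (B : V -> Omega -> Prop) (Fsel : V -> V -> Prop)
  (X Q : Omega -> Prop) : Omega -> Prop :=
  fun x => X x /\ Q x /\
    exists t i, active root par Fsel i t /\ leaf par t /\ B t x.

(** Indexing scheme with queries labelled by an index type Idx: the query
    set is { q i | i : Idx }, and F_t is given by F t i (a set of nodes),
    which must consist of children of t. *)
Definition consistent_indexing_scheme {Omega V Idx : Type}
  (root : V) (par : V -> option V) (B : V -> Omega -> Prop)
  (F : V -> Idx -> V -> Prop) (X : Omega -> Prop) (q : Idx -> Omega -> Prop)
  : Prop :=
  (forall t i s, inner par t -> F t i s -> child par t s) /\
  (forall i x, search_output root par B (fun t s => F t i s) X (q i) x
               <-> (q i x /\ X x)).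

(** The search algorithm only descends from a node to a child, so the output
    is contained in [Q ∩ X].  Conversely, let [x ∈ X] lie in the ball
    [B_eps(w)] and in the leaf set [B_t].  Every ancestor [s] of [t] still
    contains [x] (the sets grow towards the root on [X]), so [f_s x <= 0], and
    the left Lipschitz bound gives [f_s w <= f_s x + rho w x <= eps]: the whole
    root-to-leaf path is selected, and [x] is found at [t]. *)

From Stdlib Require Import Reals List Lra.
Open Scope R_scope.

Lemma left_1_lipschitz_le_ball {Omega : Type} (rho : Omega -> Omega -> R)
    (f : Omega -> R) (w x : Omega) (eps : R) :
  left_1_lipschitz rho f -> f x <= 0 -> left_ball rho w eps x -> f w <= eps.
Proof. intros Hlip Hfx Hball; specialize (Hlip w x); unfold left_ball in Hball; lra. Qed.

Lemma child_inner {V : Type} (par : V -> option V) (t s : V) :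
  child par t s -> inner par t.
Proof. now exists s. Qed.

Section ActiveAncestors.

Variables (V : Type) (root : V) (par : V -> option V) (Fsel : V -> V -> Prop).

Lemma active_of_anc (P : V -> Prop) :
  (forall v p, par v = Some p -> P v -> P p /\ Fsel p v) ->
  forall n v, anc par n v = Some root -> P v -> active root par Fsel n v.
Proof.
  intros Hstep n; induction n as [|n IH]; intros v Hanc Hv; simpl in *.
  - now injection Hanc.
  - destruct (par v) as [p|] eqn:Hpar; [|discriminate].
    destruct (Hstep v p Hpar Hv) as [Hp Hsel].
    exists p; repeat split; auto.
    exact (child_inner par p v Hpar).
Qed.

End ActiveAncestors.

Theorem theorem3p3
  (Omega : Type) (rho : Omega -> Omega -> R) (X : Omega -> Prop)
  (V : Type) (root : V) (par : V -> option V)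
  (B : V -> Omega -> Prop) (f : V -> Omega -> R) :
  quasi_metric rho ->
  finite_set X ->
  rooted_tree root par ->
  (* X \subseteq \bigcup_{t leaf} B_t *)
  (forall x, X x -> exists t, leaf par t /\ B t x) ->
  (* for inner t: \bigcup_{s \in C_t} (B_s \cap X) \subseteq B_t *)
  (forall t, inner par t -> forall s x, child par t s -> B s x -> X x -> B t x) ->
  (forall t, left_1_lipschitz rho (f t)) ->
  (forall t w, B t w -> f t w <= 0) ->
  consistent_indexing_scheme root par B
    (* queries labelled by (w, eps) with eps > 0;
       F_t(B_eps(w)) = { s \in C_t | f_s(w) <= eps } *)
    (fun t (we : {p : Omega * R | 0 < snd p}) s =>
       child par t s /\ f s (fst (proj1_sig we)) <= snd (proj1_sig we))
    X
    (fun we => left_ball rho (fst (proj1_sig we)) (snd (proj1_sig we))).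
Proof.
  intros _ _ [_ [_ Hreach]] Hcover Hgrow Hlip Hnonpos.
  split; [now intros t i s _ [Hchild _]|].
  intros [[w eps] Heps] x; simpl; split.
  - now intros [HX [HQ _]].
  - intros [HQ HX].
    destruct (Hcover x HX) as [t [Hleaf Ht]].
    destruct (Hreach t) as [n Hn].
    repeat split; auto.
    exists t, n; repeat split; auto.
    apply (active_of_anc V root par _ (fun v => B v x)); auto.
    intros v p Hpar Hv; split.
    + exact (Hgrow p (child_inner par p v Hpar) v x Hpar Hv HX).
    + split; [exact Hpar|].
      exact (left_1_lipschitz_le_ball rho (f v) w x eps (Hlip v) (Hnonpos v x Hv) HQ).
Qed.
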